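(* $\mathfrak{B}(V)=F\oplus\mathfrak{L}^-(V)$ if and only if all of the following hold: $p_{ii}=-1$ for all $i$; $p_{ij}p_{ji}=1$ for all $i\neq j$; and for every $m\ge2$ and every choice of pairwise distinct letters $h_1,\dots,h_m\in\{x_1,\dots,x_n\}$ there exists $\tau\in\mathbb{S}_m$ with $$(p_{h_{\tau(1)},h_{\tau(2)}\cdots h_{\tau(m)}}-1)(p_{h_{\tau(2)},h_{\tau(3)}\cdots h_{\tau(m)}}-1)\cdots(p_{h_{\tau(m-1)},h_{\tau(m)}}-1)\neq0 .$$
   Context: $V$ is a braided vector space of diagonal type over an algebraically closed field $F$ of characteristic $0$ with basis $x_1,\dots,x_n$, braiding $C(x_i\otimes x_j)=q_{ij}x_j\otimes x_i$, Nichols algebra $\mathfrak{B}(V)$ ($\mathbb{Z}^n$-graded, $\deg x_i=e_i$); $\chi(e_i,e_j)=q_{ij}$, $p_{ij}:=q_{ij}$, and $p_{u,v}:=\chi(\deg u,\deg v)$ for homogeneous $u,v$ (so $p_{h,h'h''\cdots}$ is the product of $p_{h,h'},p_{h,h''},\dots$). $\mathfrak{L}^-(V)$ is the Lie subalgebra of $\mathfrak{B}(V)$ generated by $V$ under the commutator $[a,b]^-=ab-ba$. *)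

From HB Require Import structures.
From mathcomp Require Import all_boot all_order all_algebra all_fingroup.
Set Implicit Arguments. Unset Strict Implicit. Unset Printing Implicit Defensive.
Import GRing.Theory.
Local Open Scope ring_scope.

(* Noncommutative formal series in x_0..x_{n-1} over F: coefficient functions
   on words.  T(V) is the subset generated (as an algebra) by 1 and the letters. *)
Definition ncs (F : fieldType) (n : nat) := seq 'I_n -> F.

Section NC.
Variables (F : fieldType) (n : nat).
Implicit Types (u v : ncs F n) (w : seq 'I_n).

Definition tzero : ncs F n := fun _ => 0.
Definition tone : ncs F n := fun w => (size w == 0%N)%:R.
Definition tletter (i : 'I_n) : ncs F n := fun w => (w == [:: i])%:R.
Definition tadd u v : ncs F n := fun w => u w + v w.
Definition tscale (c : F) u : ncs F n := fun w => c * u w.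
Definition tsub u v : ncs F n := fun w => u w - v w.
Definition tmul u v : ncs F n :=
  fun w => \sum_(k < (size w).+1) u (take k w) * v (drop k w).
Definition tcomm u v : ncs F n := tsub (tmul u v) (tmul v u).

Inductive tensT : ncs F n -> Prop :=
| tensT_one : tensT tone
| tensT_letter i : tensT (tletter i)
| tensT_add u v : tensT u -> tensT v -> tensT (tadd u v)
| tensT_scale c u : tensT u -> tensT (tscale c u)
| tensT_mul u v : tensT u -> tensT v -> tensT (tmul u v).

Inductive lieL : ncs F n -> Prop :=
| lieL_zero : lieL tzero
| lieL_letter i : lieL (tletter i)
| lieL_add u v : lieL u -> lieL v -> lieL (tadd u v)
| lieL_scale c u : lieL u -> lieL (tscale c u)
| lieL_comm u v : lieL u -> lieL v -> lieL (tcomm u v).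

Variable q : 'I_n -> 'I_n -> F.

(* skew derivation d_i: d_i(x_j) = delta_ij, d_i(uv) = u d_i(v) + chi(e_i, deg v) d_i(u) v,
   i.e. the component of the coproduct ending with ( _ ⊗ x_i ).  *)
Definition tderiv (i : 'I_n) u : ncs F n :=
  fun w => \sum_(t < (size w).+1)
             (\prod_(s <- drop t w) q i s) * u (take t w ++ i :: drop t w).

(* nz k u : the degree-k component of u lies in the Nichols ideal
   (degree 0: it vanishes; degree k+1: all d_i send it into the ideal). *)
Fixpoint nz (k : nat) u : Prop :=
  match k with
  | 0 => u [::] = 0
  | k'.+1 => forall i, nz k' (tderiv i u)
  end.

Definition nichols_zero u : Prop := forall k, nz k u.

Definition nichols_eq_F_plus_Lie : Prop :=
  (forall u, tensT u -> exists (c : F) (l : ncs F n),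
      lieL l /\ nichols_zero (tsub (tsub u (tscale c tone)) l))
  /\ (forall (c : F) (l : ncs F n), lieL l ->
      nichols_zero (tsub (tscale c tone) l) -> c = 0).

End NC.

(* If q i i = -1 and q i j * q j i = 1, then B(V) is the quantum exterior
   algebra (x_i x_j = q i j x_j x_i, x_i^2 = 0) with basis the ordered
   monomials x_S, S a set of letters; an element of T(V) vanishes in B(V) iff
   all its coordinates on this basis vanish, because these coordinates are
   compatible with the skew derivations that cut out the Nichols ideal.
   For disjoint A and B, [x_A, x_B] is a multiple of x_(A u B) which is nonzero
   iff p_(A,B) != 1.  Call an ordering h_1, ..., h_m of S a chain when
   p_(h_k, h_(k+1) ... h_m) != 1 for all k < m.  Right-normed brackets along a
   chain put x_S in L^-(V); conversely every element of L^-(V) only involves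
   sets admitting a chain, since chains of A and of B with p_(A,B) != 1 merge
   into a chain of A u B.  So B(V) = F + L^-(V) iff every set of letters
   admits a chain, which is the third condition, and the first two are forced
   in degree two by x_i x_i and x_i x_j. *)

From HB Require Import structures.
From mathcomp Require Import all_boot all_order all_algebra all_fingroup.
From mathcomp Require Import ring.
Set Implicit Arguments. Unset Strict Implicit. Unset Printing Implicit Defensive.
Import GRing.Theory.
Local Open Scope ring_scope.

Section SumWords.
Variables (R : comPzRingType) (T : finType).
Implicit Types (f g : seq T -> R).

Fixpoint sum_words (k : nat) f : R :=
  if k is k'.+1 then \sum_(x : T) sum_words k' (fun w => f (x :: w)) else f [::].

Lemma eq_sum_words k f g :
  (forall w, size w = k -> f w = g w) -> sum_words k f = sum_words k g.
Proof.
elim: k f g => [|k IHk] f g efg /=; first exact: efg.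
by apply: eq_bigr => x _; apply: IHk => w sw; apply: efg; rewrite /= sw.
Qed.

Lemma sum_words0 k : sum_words k (fun=> 0) = 0.
Proof. by elim: k => //= k IHk; rewrite big1. Qed.

Lemma sum_wordsD k f g :
  sum_words k (fun w => f w + g w) = sum_words k f + sum_words k g.
Proof.
elim: k f g => //= k IHk f g; rewrite -big_split; apply: eq_bigr => x _; exact: IHk.
Qed.

Lemma sum_wordsZ k c f : sum_words k (fun w => c * f w) = c * sum_words k f.
Proof.
elim: k f => //= k IHk f; rewrite mulr_sumr; apply: eq_bigr => x _; exact: IHk.
Qed.

Lemma sum_wordsN k f : sum_words k (fun w => - f w) = - sum_words k f.
Proof. by rewrite -mulN1r -sum_wordsZ; apply: eq_sum_words => w _; rewrite mulN1r. Qed.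

Lemma sum_words_sum (I : Type) (r : seq I) (P : pred I) k (f : I -> seq T -> R) :
  sum_words k (fun w => \sum_(j <- r | P j) f j w) = \sum_(j <- r | P j) sum_words k (f j).
Proof.
elim: k f => //= k IHk f; rewrite exchange_big /=.
by apply: eq_bigr => x _; exact: (IHk (fun j w => f j (x :: w))).
Qed.

Lemma sum_words_cat a b (G : seq T -> seq T -> R) :
  sum_words (a + b) (fun w => G (take a w) (drop a w)) =
  sum_words a (fun w1 => sum_words b (G w1)).
Proof.
elim: a G => [|a IHa] G /=.
  by apply: eq_sum_words => w _; rewrite take0 drop0.
by apply: eq_bigr => x _; exact: (IHa (fun w1 => G (x :: w1))).
Qed.

Lemma sum_words_mul a b f g :
  sum_words a (fun w1 => sum_words b (fun w2 => f w1 * g w2)) =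
  sum_words a f * sum_words b g.
Proof.
rewrite [RHS]mulrC -sum_wordsZ; apply: eq_sum_words => w1 _.
by rewrite sum_wordsZ mulrC.
Qed.

End SumWords.

Section FinsetFacts.
Variable T : finType.
Implicit Types (s : seq T) (A S : {set T}).

Lemma perm_enumE s A : uniq s -> perm_eq s (enum A) = ([set:: s] == A).
Proof.
move=> us; apply/idP/eqP => [sA | <-].
  by apply/setP => x; rewrite inE (perm_mem sA) mem_enum.
by apply: uniq_perm => // [|x]; rewrite ?enum_uniq // mem_enum inE.
Qed.

Lemma enum_neq_nil A : (enum A != [::]) = (A != set0).
Proof. by rewrite -size_eq0 -cardE cards_eq0. Qed.

Lemma perm_enum_setD A S :
  A \subset S -> perm_eq (enum A ++ enum (S :\: A)) (enum S).
Proof.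
move/subsetP=> AS; apply: uniq_perm; rewrite ?enum_uniq //.
  rewrite cat_uniq !enum_uniq /= andbT; apply/hasPn => x.
  by rewrite !mem_enum !inE => /andP [].
move=> x; rewrite mem_cat !mem_enum !inE.
by case: (boolP (x \in A)) => //= /AS ->.
Qed.

Lemma setDDK A S : A \subset S -> S :\: (S :\: A) = A.
Proof. by move=> AS; rewrite setDDr setDv set0U; apply/setIidPr. Qed.

Lemma sum_subset_compl (V : nmodType) S (G : {set T} -> V) :
  \sum_(A : {set T} | A \subset S) G A = \sum_(A : {set T} | A \subset S) G (S :\: A).
Proof.
rewrite (reindex_onto (fun A => S :\: A) (fun A => S :\: A)); last by move=> A /setDDK.
apply: eq_bigl => A; rewrite subsetDl /=.
by apply/eqP/idP => [<- | /setDDK //]; rewrite subsetDl.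
Qed.

End FinsetFacts.

Section Coefficients.
Variables (F : fieldType) (n : nat) (q : 'I_n -> 'I_n -> F).
Implicit Types (u v l : ncs F n) (a b s w : seq 'I_n) (i x : 'I_n) (A S : {set 'I_n}).

Definition plet i s : F := \prod_(t <- s) q i t.
Definition plet_lt i s : F := \prod_(t <- s | (t < i)%N) q i t.
Definition plet_gt i s : F := \prod_(t <- s | (i < t)%N) q i t.
Definition pword a b : F := \prod_(x <- a) plet x b.
Definition pword_lt a b : F := \prod_(x <- a) plet_lt x b.
Definition pword_gt a b : F := \prod_(x <- a) plet_gt x b.

(* In the quantum exterior algebra x_w = sort_coef w * x_(sort w) for a word w
   without repeated letters, so [coef s u] is the coordinate of u on the
   ordered monomial with letters s. *)
Fixpoint sort_coef w : F := if w is x :: r then plet_lt x r * sort_coef r else 1.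

Definition coef s u : F :=
  sum_words (size s) (fun w => if perm_eq w s then sort_coef w * u w else 0).

Lemma plet_lt_cat i a b : plet_lt i (a ++ b) = plet_lt i a * plet_lt i b.
Proof. exact: big_cat. Qed.

Lemma sort_coef_cat a b : sort_coef (a ++ b) = sort_coef a * sort_coef b * pword_lt a b.
Proof.
elim: a => [|x a IHa] /=; first by rewrite /pword_lt big_nil mul1r mulr1.
by rewrite IHa plet_lt_cat /pword_lt big_cons; ring.
Qed.

Lemma pword_lt_perm a a' b b' :
  perm_eq a a' -> perm_eq b b' -> pword_lt a b = pword_lt a' b'.
Proof.
move=> aa' bb'; rewrite /pword_lt (perm_big _ aa').
by apply: eq_bigr => x _; exact: perm_big.
Qed.

Lemma pword_perm a a' b b' : perm_eq a a' -> perm_eq b b' -> pword a b = pword a' b'.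
Proof.
move=> aa' bb'; rewrite /pword (perm_big _ aa').
by apply: eq_bigr => x _; exact: perm_big.
Qed.

Lemma eq_coef s u v : (forall w, perm_eq w s -> u w = v w) -> coef s u = coef s v.
Proof. by move=> uv; apply: eq_sum_words => w _; case: ifP => // /uv ->. Qed.

Lemma coef_perm s s' u : perm_eq s s' -> coef s u = coef s' u.
Proof.
by move=> ss'; rewrite /coef (perm_size ss'); apply: eq_sum_words => w _; rewrite (permPr ss').
Qed.

Lemma coefD s u v : coef s (tadd u v) = coef s u + coef s v.
Proof.
rewrite /coef -sum_wordsD; apply: eq_sum_words => w _.
by case: ifP; rewrite ?addr0 // /tadd mulrDr.
Qed.

Lemma coefZ s c u : coef s (tscale c u) = c * coef s u.
Proof.
rewrite /coef -sum_wordsZ; apply: eq_sum_words => w _.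
by case: ifP; rewrite ?mulr0 // /tscale mulrCA.
Qed.

Lemma coefB s u v : coef s (tsub u v) = coef s u - coef s v.
Proof.
rewrite /coef -sum_wordsN -sum_wordsD; apply: eq_sum_words => w _.
by case: ifP; rewrite ?subr0 // /tsub mulrBr.
Qed.

Lemma coef0 s : coef s (@tzero F n) = 0.
Proof.
by rewrite /coef (eq_sum_words (g := fun=> 0)) ?sum_words0 // => w _; case: ifP; rewrite ?mulr0.
Qed.

Lemma coef_nil u : coef [::] u = u [::].
Proof. by rewrite /coef /= mul1r. Qed.

Lemma coef_sum (I : Type) (r : seq I) (P : pred I) s (f : I -> ncs F n) :
  coef s (fun w => \sum_(j <- r | P j) f j w) = \sum_(j <- r | P j) coef s (f j).
Proof.
rewrite /coef -sum_words_sum; apply: eq_sum_words => w _.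
by case: ifP => _; rewrite ?mulr_sumr // big1.
Qed.

Lemma coef_rec s u : s != [::] ->
  coef s u = \sum_x (if x \in s
                     then plet_lt x (rem x s) * coef (rem x s) (fun y => u (x :: y))
                     else 0).
Proof.
case: s => [|y s] // _; rewrite {1}/coef [sum_words _ _]/=; apply: eq_bigr => x _.
case: ifPn => xs.
  rewrite /coef size_rem // -sum_wordsZ; apply: eq_sum_words => w _.
  rewrite (permPr (perm_to_rem xs)) perm_cons; case: ifP => wr; last by rewrite mulr0.
  by rewrite /= /plet_lt (perm_big _ wr) mulrA.
rewrite (eq_sum_words (g := fun=> 0)) ?sum_words0 // => w _; case: ifP => // xw.
by move: xs; rewrite -(perm_mem xw) mem_head.
Qed.

Lemma coef_seq1 x u : coef [:: x] u = u [:: x].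
Proof.
rewrite coef_rec // (bigD1 x) //= mem_head big1 ?addr0 => [|y yx]; last first.
  by rewrite mem_seq1 (negbTE yx).
by rewrite eqxx /plet_lt big_nil mul1r coef_nil.
Qed.

Definition supported u a := forall w, u w != 0 -> perm_eq w a.

Lemma coef_supported_eq0 u a s : supported u a -> ~~ perm_eq s a -> coef s u = 0.
Proof.
move=> ua sa; rewrite /coef (eq_sum_words (g := fun=> 0)) ?sum_words0 // => w _.
case: ifP => // ws; have [-> | /ua wa] := eqVneq (u w) 0; first by rewrite mulr0.
by move: sa; rewrite -(permPl ws) wa.
Qed.

Lemma tmul_supported u v a w : supported u a -> (size a <= size w)%N ->
  tmul u v w = u (take (size a) w) * v (drop (size a) w).
Proof.
move=> ua aw; have aw1 : (size a < (size w).+1)%N by rewrite ltnS.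
rewrite /tmul (bigD1 (Ordinal aw1)) //= big1 ?addr0 // => k ka.
have [-> | /ua kA] := eqVneq (u (take k w)) 0; first by rewrite mul0r.
move: ka; rewrite -val_eqE /= -(perm_size kA) size_takel ?eqxx //.
by rewrite -ltnS ltn_ord.
Qed.

Lemma supported_tmul u v a b : supported u a -> supported v b -> supported (tmul u v) (a ++ b).
Proof.
move=> ua vb w; apply: contraNT => wab; rewrite /tmul big1 // => k _.
have [-> | /ua wa] := eqVneq (u (take k w)) 0; first by rewrite mul0r.
have [-> | /vb wb] := eqVneq (v (drop k w)) 0; first by rewrite mulr0.
by have := perm_cat wa wb; rewrite cat_take_drop (negbTE wab).
Qed.

Lemma coef_tmul_supported u v a b : supported u a -> supported v b ->
  coef (a ++ b) (tmul u v) = pword_lt a b * coef a u * coef b v.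
Proof.
move=> ua vb; rewrite /coef size_cat.
pose G w1 w2 := sort_coef (w1 ++ w2) * (u w1 * v w2).
transitivity (sum_words (size a + size b) (fun w => G (take (size a) w) (drop (size a) w))).
  apply: eq_sum_words => w sw; rewrite (tmul_supported v ua) ?sw ?leq_addr // /G.
  case: ifP => wab; first by rewrite cat_take_drop.
  have [-> | ] := eqVneq (u (take (size a) w)) 0; first by rewrite mul0r mulr0.
  have [-> | /vb wb /ua wa] := eqVneq (v (drop (size a) w)) 0; first by rewrite !mulr0.
  by move: wab; rewrite -(cat_take_drop (size a) w) perm_cat.
have supp_coef c (t : ncs F n) : supported t c ->
    sum_words (size c) (fun w => if perm_eq w c then sort_coef w * t w else 0) =
    sum_words (size c) (fun w => sort_coef w * t w).
  move=> tc; apply: eq_sum_words => w _; case: ifP => // wc.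
  by have [-> | /tc] := eqVneq (t w) 0; rewrite ?mulr0 ?wc.
rewrite sum_words_cat !supp_coef // -mulrA -sum_words_mul -sum_wordsZ.
apply: eq_sum_words => w1 _; rewrite -sum_wordsZ; apply: eq_sum_words => w2 _.
rewrite /G; have [-> | /ua w1a] := eqVneq (u w1) 0; first by rewrite !(mulr0, mul0r).
have [-> | /vb w2b] := eqVneq (v w2) 0; first by rewrite !(mulr0, mul0r).
by rewrite sort_coef_cat (pword_lt_perm w1a w2b); ring.
Qed.

Definition restrict A u : ncs F n := fun w => if perm_eq w (enum A) then u w else 0.

Lemma supported_restrict A u : supported (restrict A u) (enum A).
Proof. by move=> w; rewrite /restrict; case: ifP; rewrite ?eqxx. Qed.

Lemma coef_restrict A u : coef (enum A) (restrict A u) = coef (enum A) u.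
Proof. by apply: eq_coef => w wA; rewrite /restrict wA. Qed.

Lemma tmul_restrict S u v w : perm_eq w (enum S) ->
  tmul u v w = \sum_(A : {set 'I_n} | A \subset S) tmul (restrict A u) (restrict (S :\: A) v) w.
Proof.
move=> wS; have uw : uniq w by rewrite (perm_uniq wS) enum_uniq.
rewrite /tmul exchange_big /=; apply: eq_bigr => j _.
set A0 := [set:: take j w].
have A0S : A0 \subset S.
  by apply/subsetP => x; rewrite inE => /mem_take; rewrite (perm_mem wS) mem_enum.
rewrite (bigD1 A0) //= big1 ?addr0 => [|A /andP [_ AA0]]; last first.
  by rewrite /restrict perm_enumE ?take_uniq // eq_sym (negbTE AA0) mul0r.
rewrite /restrict !perm_enumE ?take_uniq ?drop_uniq // eqxx.
suff -> : [set:: drop j w] == S :\: A0 by [].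
have : uniq (take j w ++ drop j w) by rewrite cat_take_drop.
rewrite cat_uniq => /and3P [_ /hasPn tw _].
apply/eqP/setP => x; rewrite !inE.
have -> : (x \in S) = (x \in w) by rewrite -mem_enum (perm_mem wS).
have -> : (x \in w) = (x \in take j w) || (x \in drop j w) by rewrite -mem_cat cat_take_drop.
by case: (boolP (x \in drop j w)) => [/tw -> | _]; rewrite ?orbT ?orbF ?andNb.
Qed.

Lemma coef_tmul S u v : coef (enum S) (tmul u v) =
  \sum_(A : {set 'I_n} | A \subset S) pword_lt (enum A) (enum (S :\: A)) *
                         coef (enum A) u * coef (enum (S :\: A)) v.
Proof.
rewrite (@eq_coef _ _ (fun w => \sum_(A : {set 'I_n} | A \subset S)
           tmul (restrict A u) (restrict (S :\: A) v) w)); last exact: tmul_restrict.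
rewrite coef_sum; apply: eq_bigr => A AS.
rewrite -(coef_perm _ (perm_enum_setD AS)).
by rewrite (coef_tmul_supported (@supported_restrict _ _) (@supported_restrict _ _)) !coef_restrict.
Qed.

Lemma coef_tcomm S u v : coef (enum S) (tcomm u v) =
  \sum_(A : {set 'I_n} | A \subset S)
     (pword_lt (enum A) (enum (S :\: A)) - pword_lt (enum (S :\: A)) (enum A)) *
     coef (enum A) u * coef (enum (S :\: A)) v.
Proof.
rewrite /tcomm coefB !coef_tmul [X in _ - X](sum_subset_compl S) -sumrB.
by apply: eq_bigr => A AS; rewrite setDDK //; ring.
Qed.

Lemma tderiv_cons i u x y : tderiv q i u (x :: y) =
  plet i (x :: y) * u (i :: x :: y) + tderiv q i (fun y => u (x :: y)) y.
Proof. by rewrite /tderiv /= big_ord_recl. Qed.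

Lemma coef_tderiv_rec i u s : s != [::] ->
  coef s (tderiv q i u) = plet i s * coef s (fun y => u (i :: y)) +
    \sum_x (if x \in s
            then plet_lt x (rem x s) * coef (rem x s) (tderiv q i (fun y => u (x :: y)))
            else 0).
Proof.
move=> s0; rewrite !coef_rec // mulr_sumr -big_split /=; apply: eq_bigr => x _.
case: ifP => xs; last by rewrite mulr0 addr0.
rewrite (@eq_coef _ (fun y => tderiv q i u (x :: y))
          (tadd (tscale (plet i s) (fun y => u (i :: x :: y)))
                (tderiv q i (fun y => u (x :: y))))); last first.
  move=> y ys; rewrite tderiv_cons /plet (perm_big s) //.
  by rewrite (permPr (perm_to_rem xs)) perm_cons.
by rewrite coefD coefZ; ring.
Qed.

Lemma plet_lt_gt i s : i \notin s -> plet_lt i s * plet_gt i s = plet i s.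
Proof.
elim: s => [|x s IHs]; first by rewrite /plet_lt /plet_gt /plet !big_nil mulr1.
rewrite in_cons negb_or => /andP [ix /IHs {}IHs].
move: IHs; rewrite /plet_lt /plet_gt /plet !big_cons => <-.
case: ltngtP => [_ | _ | /val_inj ei]; [by rewrite mulrA | by rewrite mulrCA |].
by rewrite ei eqxx in ix.
Qed.

Lemma plet_rem i x s : x \in s -> plet i s = q i x * plet i (rem x s).
Proof. by move=> xs; rewrite /plet (perm_big _ (perm_to_rem xs)) big_cons. Qed.

Lemma plet_gt_rem i x s : x \in s ->
  plet_gt i s = (if (i < x)%N then q i x else 1) * plet_gt i (rem x s).
Proof.
move=> xs; rewrite /plet_gt (perm_big _ (perm_to_rem xs)) big_cons.
by case: ifP; rewrite ?mul1r.
Qed.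

Lemma plet_lt_cons x i s :
  plet_lt x (i :: s) = (if (i < x)%N then q x i else 1) * plet_lt x s.
Proof. by rewrite /plet_lt big_cons; case: ifP; rewrite ?mul1r. Qed.

Hypothesis q_diag : forall i, q i i = -1.
Hypothesis q_skew : forall i j, i != j -> q i j * q j i = 1.

Lemma coef_tderiv s u i : uniq s ->
  coef s (tderiv q i u) = if i \in s then 0 else plet_gt i s * coef (i :: s) u.
Proof.
have [k] := ubnP (size s); elim: k => // k IHk in s u *; rewrite ltnS => sk us.
have [-> | s0] := eqVneq s [::].
  rewrite coef_nil coef_seq1 /tderiv /= big_ord_recl big_ord0.
  by rewrite /plet_gt /plet !big_nil !mul1r addr0.
have IHrem x : x \in s ->
    coef (rem x s) (tderiv q i (fun y => u (x :: y))) =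
    if i \in rem x s then 0
    else plet_gt i (rem x s) * coef (i :: rem x s) (fun y => u (x :: y)).
  move=> xs; apply: IHk; last exact: rem_uniq.
  by rewrite size_rem // (leq_trans _ sk) // ltn_predL lt0n size_eq0.
rewrite coef_tderiv_rec //; case: (boolP (i \in s)) => [iS | niS].
  (* the two terms in which d_i removes the letter i cancel, as q i i = -1 *)
  rewrite (bigD1 i) //= iS IHrem // mem_rem_uniqF // big1 ?addr0 => [|x xi]; last first.
    by case: ifP => // xs; rewrite IHrem // (mem_rem_uniq _ us) inE eq_sym xi iS mulr0.
  rewrite -(coef_perm _ (perm_to_rem iS)) mulrA plet_lt_gt ?mem_rem_uniqF //.
  by rewrite (plet_rem _ iS) q_diag; ring.
(* commuting x_i past another letter x and back costs q i x * q x i = 1 *)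
rewrite (bigD1 i) //= (negbTE niS) add0r [coef (i :: s) u]coef_rec //.
rewrite [in RHS](bigD1 i) //= mem_head eqxx mulrDr mulrA [plet_gt i s * _]mulrC plet_lt_gt //.
congr (_ + _); rewrite mulr_sumr; apply: eq_bigr => x xi.
have ix : (i == x) = false by rewrite eq_sym (negbTE xi).
rewrite in_cons (negbTE xi) ix /=; case: ifP => xs; last by rewrite mulr0.
rewrite IHrem // (negbTE (contra (@mem_rem _ _ _ _) niS)).
rewrite plet_lt_cons (plet_gt_rem _ xs); case: ifP => _; last by rewrite !mul1r mulrCA.
rewrite -[LHS]mul1r -(q_skew xi); ring.
Qed.

Hypothesis q_neq0 : forall i j, q i j != 0.

Lemma plet_gt_neq0 i s : plet_gt i s != 0.
Proof. by rewrite prodf_seq_neq0; apply/allP => x _; rewrite q_neq0 implybT. Qed.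

Lemma nz_coefP k u : nz q k u <-> (forall s, uniq s -> size s = k -> coef s u = 0).
Proof.
elim: k u => [|k IHk] u /=.
  by split=> [u0 s _ /size0nil -> | /(_ [::] isT erefl)]; rewrite coef_nil.
split=> [nzu [|i s] // /andP [iS us] [sk] | coef0u i].
  have /eqP := (IHk _).1 (nzu i) s us sk.
  by rewrite coef_tderiv // (negbTE iS) mulf_eq0 (negbTE (plet_gt_neq0 _ _)) => /eqP.
apply/IHk => s us sk; rewrite coef_tderiv //; case: ifPn => // iS.
by rewrite coef0u ?mulr0 //= ?iS ?sk.
Qed.

Lemma nichols_zeroP u : nichols_zero q u <-> (forall S, coef (enum S) u = 0).
Proof.
split=> [zu S | coef0u k]; first exact: (nz_coefP _ _).1 (zu _) _ (enum_uniq _) erefl.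
apply/nz_coefP => s us _; rewrite (coef_perm _ (_ : perm_eq s (enum [set:: s]))) //.
by rewrite perm_enumE.
Qed.

Lemma pword_gt_neq0 a b : pword_gt a b != 0.
Proof. by rewrite prodf_seq_neq0; apply/allP => x _; rewrite plet_gt_neq0. Qed.

Lemma pword_lt_neq0 a b : pword_lt a b != 0.
Proof.
rewrite prodf_seq_neq0; apply/allP => x _; rewrite prodf_seq_neq0.
by apply/allP => y _; rewrite q_neq0 implybT.
Qed.

(* [pword_lt a b - pword_lt b a] is the coordinate of [x_a, x_b] on x_(a ++ b). *)
Lemma pword_lt_sub a b : {in a, forall x, x \notin b} ->
  (pword_lt a b - pword_lt b a) * pword_gt a b = pword a b - 1.
Proof.
move=> ab; rewrite mulrBl; congr (_ - _).
  rewrite /pword_lt /pword_gt /pword -big_split /=.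
  by apply: eq_big_seq => x /ab; exact: plet_lt_gt.
have -> : pword_lt b a = \prod_(x <- a) \prod_(t <- b | (x < t)%N) q t x.
  rewrite /pword_lt /plet_lt; under eq_bigr do rewrite big_mkcond; rewrite exchange_big /=.
  by apply: eq_bigr => x _; rewrite [RHS]big_mkcond.
rewrite /pword_gt /plet_gt -big_split /=; apply: big1 => x _.
rewrite -big_split /=; apply: big1 => t xt.
by rewrite q_skew // neq_ltn xt orbT.
Qed.

Lemma pword_lt_eq a b : {in a, forall x, x \notin b} ->
  (pword_lt a b == pword_lt b a) = (pword a b == 1).
Proof.
move=> ab; rewrite -subr_eq0 -[pword a b == 1]subr_eq0 -(pword_lt_sub ab).
by rewrite mulf_eq0 (negbTE (pword_gt_neq0 _ _)) orbF.
Qed.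

(* The condition of the theorem on the ordering h_tau(1), ..., h_tau(m),
   see [chain_map_ord]. *)
Fixpoint chain a : bool :=
  if a is x :: r then ((r == [::]) || (plet x r != 1)) && chain r else true.

Definition chainable s : bool := has chain (permutations s).

Lemma chainableP s : reflect (exists2 c, perm_eq c s & chain c) (chainable s).
Proof.
apply: (iffP hasP) => -[c]; rewrite ?mem_permutations => cs cc; exists c => //.
by rewrite mem_permutations.
Qed.

Lemma chainable_perm s t : perm_eq s t -> chainable s = chainable t.
Proof.
move=> st; apply/chainableP/chainableP => -[c cs cc]; exists c => //.
  exact: perm_trans cs st.
by rewrite (permPr st).
Qed.

Lemma chain_small a : (size a <= 1)%N -> chain a.
Proof. by case: a => [|x [|y r]]. Qed.

Lemma chainable_small a : (size a <= 1)%N -> chainable a.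
Proof. by move=> a1; apply/chainableP; exists a; rewrite ?chain_small. Qed.

Lemma pword_cons x a b : pword (x :: a) b = plet x b * pword a b.
Proof. by rewrite /pword big_cons. Qed.

Lemma pword_consr x a b : pword a (x :: b) = (\prod_(t <- a) q t x) * pword a b.
Proof. by rewrite /pword -big_split /=; apply: eq_bigr => y _; rewrite /plet big_cons. Qed.

Lemma prod_q_plet x a : x \notin a -> (\prod_(t <- a) q t x) * plet x a = 1.
Proof.
move=> xa; rewrite /plet -big_split /=; apply: big1_seq => t /andP [_ ta].
by rewrite q_skew //; apply: contraNneq xa => <-.
Qed.

Lemma mul_neq1_cases (al de be ga : F) : de * al = 1 -> al != 1 -> be * ga != 1 ->
  (ga != 1) && (al * be != 1) || (be != 1) && (de * ga != 1).
Proof.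
move=> deal al1 bega1; have [ga1 | ga1] /= := eqVneq ga 1.
  move: bega1; rewrite ga1 !mulr1 => -> /=.
  by apply: contra al1 => /eqP de1; rewrite -deal de1 mul1r.
have [albe1 | //] := eqVneq (al * be) 1.
have bede : be = de by rewrite -[be]mul1r -deal -mulrA albe1 mulr1.
rewrite -bede bega1 andbT; apply: contra al1 => /eqP be1.
by rewrite -deal -bede be1 mul1r.
Qed.

(* With a = x :: a', either x :: c for a chain c of a' ++ b, or a chain of
   a' ++ x :: b works, according to [mul_neq1_cases]. *)
Lemma chainable_cat a b : uniq (a ++ b) -> chain a -> chain b ->
  a != [::] -> b != [::] -> pword a b != 1 -> chainable (a ++ b).
Proof.
elim: a b => [|x a IHa] b // uab /andP [hd ca] cb _ b0.
have [-> | a0] := eqVneq a [::].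
  rewrite /pword big_seq1 => pxb; apply/chainableP; exists (x :: b) => //=.
  by rewrite cb (negbTE b0) pxb.
rewrite pword_cons => pab; move: hd; rewrite (negbTE a0) /= => al1.
move: uab; rewrite cat_cons cons_uniq mem_cat negb_or => /andP [/andP [xa xb] uab].
have /orP [/andP [ga1 albe1] | /andP [be1 dega1]] :=
  mul_neq1_cases (prod_q_plet xa) al1 pab.
  have /chainableP [c cab cc] := IHa b uab ca cb a0 b0 ga1.
  apply/chainableP; exists (x :: c); first by rewrite perm_cons.
  rewrite /= cc andbT; apply/orP; right.
  by rewrite /plet (perm_big _ cab) big_cat.
have pxab : perm_eq (a ++ x :: b) (x :: a ++ b) by rewrite -cat1s perm_catCA.
have uaxb : uniq (a ++ x :: b) by rewrite (perm_uniq pxab) /= mem_cat negb_or xa xb.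
have cxb : chain (x :: b) by rewrite /= cb be1 orbT.
by rewrite -(chainable_perm pxab); apply: IHa; rewrite ?pword_consr.
Qed.

Lemma tmul_nil u v : tmul u v [::] = u [::] * v [::].
Proof. by rewrite /tmul big_ord_recl big_ord0 addr0. Qed.

Lemma lieL_nil l : lieL l -> l [::] = 0.
Proof.
elim=> {l} // [u v _ u0 _ v0 | c u _ u0 | u v _ u0 _ v0].
- by rewrite /tadd u0 v0 addr0.
- by rewrite /tscale u0 mulr0.
- by rewrite /tcomm /tsub !tmul_nil u0 v0 mulr0 subrr.
Qed.

Lemma coef_letter_big s i : (1 < size s)%N -> coef s (tletter F i) = 0.
Proof.
move=> s1; rewrite /coef (eq_sum_words (g := fun=> 0)) ?sum_words0 // => w ws.
rewrite /tletter; case: eqP => [wi | _]; last by case: ifP; rewrite ?mulr0.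
by rewrite -ws wi in s1.
Qed.

Lemma coef_tone s : s != [::] -> coef s (@tone F n) = 0.
Proof.
move=> s0; rewrite /coef (eq_sum_words (g := fun=> 0)) ?sum_words0 // => w ws.
by rewrite /tone ws size_eq0 (negbTE s0); case: ifP; rewrite ?mulr0.
Qed.

Lemma lieL_coef_neq0 l s : lieL l -> coef s l != 0 -> s != [::].
Proof. by move=> Ll; apply: contraNneq => ->; rewrite coef_nil lieL_nil. Qed.

Lemma chainable_coef_lieL l S : lieL l -> coef (enum S) l != 0 -> chainable (enum S).
Proof.
move=> Ll; elim: Ll S => {l} [|i|u v _ IHu _ IHv|c u _ IHu|u v Lu IHu Lv IHv] S.
- by rewrite coef0 eqxx.
- case: (leqP (size (enum S)) 1) => [/chainable_small // | S1].
  by rewrite coef_letter_big ?eqxx.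
- rewrite coefD; have [-> | /IHu //] := eqVneq (coef (enum S) u) 0.
  by rewrite add0r; exact: IHv.
- by rewrite coefZ mulf_eq0 negb_or => /andP [_ /IHu].
rewrite coef_tcomm; apply: contraNT => nchS; rewrite big1 // => A AS.
have [-> | uA] := eqVneq (coef (enum A) u) 0; first by rewrite mulr0 mul0r.
have [-> | vB] := eqVneq (coef (enum (S :\: A)) v) 0; first by rewrite mulr0.
suff /eqP -> : pword_lt (enum A) (enum (S :\: A)) == pword_lt (enum (S :\: A)) (enum A).
  by rewrite subrr !mul0r.
rewrite pword_lt_eq => [|x]; last by rewrite !mem_enum inE => ->.
apply: contraNT nchS => p1.
have /chainableP [a aA ca] := IHu _ uA; have /chainableP [b bB cb] := IHv _ vB.
rewrite -(chainable_perm (perm_enum_setD AS)) -(chainable_perm (perm_cat aA bB)).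
apply: chainable_cat => //.
- by rewrite (perm_uniq (perm_cat aA bB)) (perm_uniq (perm_enum_setD AS)) enum_uniq.
- by rewrite -size_eq0 (perm_size aA) size_eq0 (lieL_coef_neq0 Lu uA).
- by rewrite -size_eq0 (perm_size bB) size_eq0 (lieL_coef_neq0 Lv vB).
- by rewrite (pword_perm aA bB).
Qed.

Fixpoint rbracket a : ncs F n :=
  if a is x :: r then (if r is [::] then tletter F x else tcomm (tletter F x) (rbracket r))
  else @tzero F n.

Fixpoint monomial a : ncs F n :=
  if a is x :: r then tmul (tletter F x) (monomial r) else @tone F n.

Lemma lieL_rbracket a : lieL (rbracket a).
Proof.
elim: a => [|x [|y r] IHa] /=; first exact: lieL_zero; first exact: lieL_letter.
by apply: lieL_comm => //; exact: lieL_letter.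
Qed.

Lemma tensT_monomial a : tensT (monomial a).
Proof.
elim: a => [|x r IHa] /=; first exact: tensT_one.
by apply: tensT_mul => //; exact: tensT_letter.
Qed.

Lemma supported_letter x : supported (tletter F x) [:: x].
Proof.
by move=> w; rewrite /tletter; have [-> _ | _] := eqVneq w [:: x]; rewrite ?eqxx.
Qed.

Lemma supported_rbracket a : a != [::] -> supported (rbracket a) a.
Proof.
elim: a => [|x [|y r] IHa] // _; first exact: supported_letter.
move=> w; rewrite /= /tcomm /tsub.
have [-> | /(supported_tmul (@supported_letter x) (IHa isT)) //] :=
  eqVneq (tmul (tletter F x) (rbracket (y :: r)) w) 0.
rewrite sub0r oppr_eq0 => /(supported_tmul (IHa isT) (@supported_letter x)) /permPl ->.
by rewrite perm_catC.
Qed.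

Lemma supported_monomial a : supported (monomial a) a.
Proof.
elim: a => [|x r IHa] /=; last exact: supported_tmul (@supported_letter x) IHa.
by case=> // y w; rewrite /tone eqxx.
Qed.

Lemma coef_letter x : coef [:: x] (tletter F x) = 1.
Proof. by rewrite coef_seq1 /tletter eqxx. Qed.

Lemma coef_monomial_neq0 a : coef a (monomial a) != 0.
Proof.
elim: a => [|x r IHa] /=; first by rewrite coef_nil /tone oner_eq0.
rewrite -cat1s (coef_tmul_supported (@supported_letter x) (@supported_monomial r)).
by rewrite coef_letter mulr1 mulf_neq0 // pword_lt_neq0.
Qed.

Lemma coef_rbracket_neq0 a : uniq a -> chain a -> a != [::] -> coef a (rbracket a) != 0.
Proof.
elim: a => [|x [|y r] IHa] //; first by rewrite coef_letter oner_eq0.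
move=> /andP [xr ur] /andP [pxr cr] _; rewrite /= in pxr.
rewrite [rbracket _]/= /tcomm coefB -[x :: y :: r]cat1s.
rewrite (coef_tmul_supported (@supported_letter x) (@supported_rbracket (y :: r) isT)).
rewrite (coef_perm _ (permEl (perm_catC [:: x] (y :: r)))).
rewrite (coef_tmul_supported (@supported_rbracket (y :: r) isT) (@supported_letter x)) coef_letter.
rewrite !mulr1 -mulrBl mulf_neq0 ?IHa // subr_eq0 pword_lt_eq => [|z]; last first.
  by rewrite mem_seq1 => /eqP ->.
by rewrite /pword big_seq1.
Qed.

Lemma lieL_interpolate u (r : seq {set 'I_n}) : uniq r -> {in r, forall S, chainable (enum S)} ->
  exists2 l, lieL l &
    forall S, S != set0 -> coef (enum S) l = if S \in r then coef (enum S) u else 0.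
Proof.
elim: r => [|S r IHr] /=.
  by move=> _ _; exists (@tzero F n) => [|S _]; rewrite ?coef0 //; exact: lieL_zero.
case/andP => Sr ur chr.
have [l' Ll' el'] : exists2 l, lieL l & forall T, T != set0 ->
    coef (enum T) l = if T \in r then coef (enum T) u else 0.
  by apply: IHr => // T Tr; apply: chr; rewrite in_cons Tr orbT.
have [S0 | S0] := eqVneq S set0.
  exists l' => // T T0; rewrite el' // in_cons; case: eqP => // TS.
  by move: T0; rewrite TS S0 eqxx.
have /chainableP [a aS ca] := chr S (mem_head _ _).
have ua : uniq a by rewrite (perm_uniq aS) enum_uniq.
have a0 : a != [::] by rewrite -size_eq0 (perm_size aS) size_eq0 enum_neq_nil.
exists (tadd l' (tscale (coef (enum S) u / coef a (rbracket a)) (rbracket a))).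
  by apply: lieL_add => //; apply/lieL_scale/lieL_rbracket.
move=> T T0; rewrite coefD coefZ el' // in_cons.
have [-> | TS] := eqVneq T S.
  by rewrite (negbTE Sr) add0r -(coef_perm (rbracket a) aS) divfK ?coef_rbracket_neq0.
rewrite (coef_supported_eq0 (s := enum T) (supported_rbracket a0)) ?mulr0 ?addr0 //.
by rewrite (permPr aS) perm_enumE ?enum_uniq // set_enum.
Qed.

Lemma chainable_nichols_eq_F_plus_Lie :
  (forall S, chainable (enum S)) -> nichols_eq_F_plus_Lie q.
Proof.
move=> chS; split=> [u _ | c l Ll /(_ 0%N)]; last first.
  by rewrite /= /tsub /tscale /tone /= (lieL_nil Ll) subr0 mulr1.
have [l Ll el] := lieL_interpolate u (enum_uniq [set: {set 'I_n}]) (in1W chS).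
exists (u [::]), l; split => //; apply/nichols_zeroP => S; rewrite !coefB coefZ.
have [-> | S0] := eqVneq S set0.
  by rewrite enum_set0 !coef_nil (lieL_nil Ll) /tone /= mulr1 subrr subr0.
by rewrite el // mem_enum in_setT coef_tone ?enum_neq_nil // mulr0 subr0 subrr.
Qed.

Lemma nichols_eq_F_plus_Lie_chainable : nichols_eq_F_plus_Lie q -> forall S, chainable (enum S).
Proof.
move=> [decomp _] S; have [c [l [Ll zl]]] := decomp _ (tensT_monomial (enum S)).
have [-> | S0] := eqVneq S set0; first by rewrite enum_set0 chainable_small.
apply: (chainable_coef_lieL Ll); move/nichols_zeroP: zl => /(_ S) /eqP.
rewrite !coefB coefZ coef_tone ?enum_neq_nil // mulr0 subr0 subr_eq0 => /eqP <-.
exact: coef_monomial_neq0.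
Qed.

End Coefficients.

Section DegreeTwo.
Variables (F : fieldType) (n : nat) (q : 'I_n -> 'I_n -> F).
Implicit Types (u v l : ncs F n) (i j : 'I_n).

Lemma nichols_zero_seq2 v i j : nichols_zero q v -> q i j * v [:: i; j] + v [:: j; i] = 0.
Proof.
move=> /(_ 2%N i j) /=; rewrite /tderiv /= !big_ord_recl !big_ord0 /= !big_cons !big_nil.
by rewrite !mulr1 !mul1r !addr0.
Qed.

Lemma tmul_seq2 u v i j :
  tmul u v [:: i; j] = u [::] * v [:: i; j] + u [:: i] * v [:: j] + u [:: i; j] * v [::].
Proof. by rewrite /tmul !big_ord_recl big_ord0 /= addr0 addrA. Qed.

Lemma tletter_seq2 k i j : tletter F k [:: i; j] = 0.
Proof. by rewrite /tletter; case: eqP. Qed.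

Lemma tletter_seq1 k i : tletter F k [:: i] = (i == k)%:R.
Proof. by rewrite /tletter eqseq_cons andbT. Qed.

Lemma lieL_seq2_diag l i : lieL l -> l [:: i; i] = 0.
Proof.
elim=> {l} // [k | u v _ u0 _ v0 | c u _ u0 | u v _ _ _ _]; first exact: tletter_seq2.
- by rewrite /tadd u0 v0 addr0.
- by rewrite /tscale u0 mulr0.
by rewrite /tcomm /tsub !tmul_seq2; ring.
Qed.

Lemma lieL_seq2_antisym l i j : lieL l -> l [:: i; j] + l [:: j; i] = 0.
Proof.
elim=> {l} [|k|u v _ uij _ vij|c u _ uij|u v _ _ _ _].
- by rewrite /tzero addr0.
- by rewrite !tletter_seq2 addr0.
- by rewrite /tadd addrACA uij vij addr0.
- by rewrite /tscale -mulrDr uij mulr0.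
by rewrite /tcomm /tsub !tmul_seq2; ring.
Qed.

Lemma nichols_eq_F_plus_Lie_qii : nichols_eq_F_plus_Lie q -> forall i, q i i = -1.
Proof.
move=> [decomp _] i.
have [c [l [Ll /(nichols_zero_seq2 i i)]]] :=
  decomp _ (tensT_mul (tensT_letter F i) (tensT_letter F i)).
rewrite /tsub /tscale tmul_seq2 !tletter_seq1 tletter_seq2 (lieL_seq2_diag i Ll) /tone /=.
by rewrite eqxx !(mul0r, mulr0, mulr1, mulr1n, add0r, addr0, subr0) => /eqP; rewrite addr_eq0 => /eqP.
Qed.

Lemma nichols_eq_F_plus_Lie_qij :
  nichols_eq_F_plus_Lie q -> forall i j, i != j -> q i j * q j i = 1.
Proof.
move=> [decomp _] i j ij.
have [c [l [Ll zw]]] := decomp _ (tensT_mul (tensT_letter F i) (tensT_letter F j)).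
have := nichols_zero_seq2 i j zw; have := nichols_zero_seq2 j i zw.
rewrite /tsub /tscale !tmul_seq2 !tletter_seq1 !tletter_seq2 /tone /= !eqxx (negbTE ij).
have -> : l [:: j; i] = - l [:: i; j].
  by apply/eqP; rewrite -addr_eq0 addrC (lieL_seq2_antisym i j Ll).
set al := l [:: i; j].
rewrite !(mul0r, mulr0, mul1r, mulr1, mulr1n, mulr0n, add0r, addr0, subr0, sub0r, oppr0, opprK).
move=> eji eij; have al0 : al != 0.
  by apply/eqP => al0; move: eji; rewrite al0 mulr0 add0r subr0 => /eqP; rewrite oner_eq0.
have : al * (q i j * q j i - 1) = q i j * (q j i * al + (1 - al)) - (q i j * (1 - al) + al).
  by ring.
by rewrite eji eij mulr0 subr0 => /eqP; rewrite mulf_eq0 (negbTE al0) subr_eq0 => /eqP.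
Qed.

End DegreeTwo.

Lemma map_nth_enum_ord (T : Type) (d : T) m s :
  size s = m -> [seq nth d s j | j : 'I_m <- enum 'I_m] = s.
Proof.
by move=> <-; rewrite -[RHS](mkseq_nth d) /mkseq -val_enum_ord -map_comp.
Qed.

Section ChainOrderings.
Variables (F : fieldType) (n : nat) (q : 'I_n -> 'I_n -> F).

Definition chain_orderable := forall (m : nat) (h : 'I_m -> 'I_n), (2 <= m)%N -> injective h ->
  exists tau : 'S_m,
    \prod_(k < m | (k.+1 < m)%N)
       ((\prod_(l < m | (k < l)%N) q (h (tau k)) (h (tau l))) - 1) != 0.

Lemma chain_nth a d :
  chain q a <-> (forall k, (k.+1 < size a)%N -> plet q (nth d a k) (drop k.+1 a) != 1).
Proof.
elim: a => [|x r IHr] //=; split => [/andP [hd cr] [|k] kr | ch].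
- by rewrite drop0; case: r kr hd {IHr cr}.
- exact: IHr.1.
apply/andP; split; last by apply/IHr => k kr; exact: ch k.+1 kr.
by case: r ch {IHr} => // y r ch; rewrite (ch 0%N).
Qed.

Lemma chain_map_ord m (g : 'I_m -> 'I_n) :
  chain q [seq g j | j <- enum 'I_m] =
  (\prod_(k < m | (k.+1 < m)%N) ((\prod_(l < m | (k < l)%N) q (g k) (g l)) - 1) != 0).
Proof.
case: m g => [|m] g; first by rewrite enum_ord0 big_ord0 oner_eq0.
set a := [seq g j | j <- enum 'I_m.+1]; pose d := g ord0.
have sa : size a = m.+1 by rewrite size_map size_enum_ord.
have nth_a (j : 'I_m.+1) : nth d a j = g j.
  by rewrite (nth_map ord0) ?size_enum_ord // nth_ord_enum.
have plet_drop (k : 'I_m.+1) :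
    plet q (g k) (drop k.+1 a) = \prod_(l < m.+1 | (k < l)%N) q (g k) (g l).
  have -> : drop k.+1 a = [seq nth d a t | t <- iota k.+1 (m.+1 - k.+1)].
    by rewrite map_nth_iota ?sa // take_oversize // size_drop sa.
  rewrite /plet big_map -/(index_iota k.+1 m.+1) big_geq_mkord.
  by apply: eq_bigr => l _; rewrite nth_a.
apply/idP/idP => [/(chain_nth _ d) ch | /prodf_neq0 pr].
  by apply/prodf_neq0 => k km; rewrite subr_eq0 -plet_drop -nth_a ch ?sa.
apply/(chain_nth _ d) => k km; have km1 : (k < m.+1)%N by rewrite ltnW // -sa.
by move: (pr (Ordinal km1)); rewrite subr_eq0 -plet_drop -[k]/(Ordinal km1 : nat) nth_a; apply; rewrite /= -sa.
Qed.

Lemma chain_orderable_chainable : chain_orderable -> forall S : {set 'I_n}, chainable q (enum S).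
Proof.
move=> ord S; case: (leqP (size (enum S)) 1) => [/chainable_small // | S2].
have d : 'I_n by move: S2; case: (enum S) => [|x _] // _; exact: x.
pose m := size (enum S); pose h (j : 'I_m) := nth d (enum S) j.
have hinj : injective h.
  by move=> j1 j2 /eqP; rewrite nth_uniq ?enum_uniq // => /eqP /val_inj.
have [tau ptau] := ord m h S2 hinj.
apply/chainableP; exists [seq h (tau j) | j <- enum 'I_m]; last first.
  by move: (chain_map_ord (fun j => h (tau j))) => /= ->.
have tau_enum : perm_eq (map tau (enum 'I_m)) (enum 'I_m).
  apply: uniq_perm; rewrite ?(map_inj_uniq perm_inj) ?enum_uniq // => j.
  by rewrite mem_enum; have := perm_onto tau j; rewrite inE.
by rewrite -[X in perm_eq _ X](map_nth_enum_ord d erefl) map_comp perm_map.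
Qed.

Lemma chainable_chain_orderable : (forall S : {set 'I_n}, chainable q (enum S)) -> chain_orderable.
Proof.
move=> chS m h m2 hinj; pose s := [seq h j | j <- enum 'I_m].
have us : uniq s by rewrite map_inj_uniq ?enum_uniq.
have ss : size s = m by rewrite size_map size_enum_ord.
have /chainableP [c cs cc] : chainable q s.
  by rewrite (chainable_perm q (_ : perm_eq s (enum [set:: s]))) ?perm_enumE.
have sc : size c = m by rewrite (perm_size cs).
have m0 : (0 < m)%N by apply: leq_trans m2.
pose d := h (Ordinal m0); pose f (k : 'I_m) := insubd k (index (nth d c k) s).
have hf k : h (f k) = nth d c k.
  have ck : nth d c k \in s by rewrite -(perm_mem cs) mem_nth ?sc.
  have fk : val (f k) = index (nth d c k) s by rewrite val_insubd -{2}ss index_mem ck.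
  transitivity (nth d s (f k)); first by rewrite (nth_map (f k)) ?size_enum_ord // nth_ord_enum.
  by rewrite fk nth_index.
have finj : injective f.
  move=> k1 k2 fk; apply/val_inj/eqP.
  rewrite -(nth_uniq d _ _ (_ : uniq c)) ?sc ?ltn_ord ?(perm_uniq cs) //.
  by change (nth d c k1 == nth d c k2); rewrite -!hf fk.
exists (perm finj); move: (chain_map_ord (fun j => h (perm finj j))) => /= <-.
suff -> : [seq h (perm finj j) | j <- enum 'I_m] = c by [].
by rewrite -[RHS](map_nth_enum_ord d sc); apply: eq_map => j; rewrite permE hf.
Qed.

End ChainOrderings.

Theorem proposition6p4 (F : closedFieldType) (charF0 : [pchar F] =i pred0)
  (n : nat) (q : 'I_n -> 'I_n -> F) (q_neq0 : forall i j, q i j != 0) :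
  nichols_eq_F_plus_Lie q <->
  [/\ (forall i, q i i = -1),
      (forall i j, i != j -> q i j * q j i = 1)
    & (forall (m : nat) (h : 'I_m -> 'I_n), (2 <= m)%N -> injective h ->
        exists tau : 'S_m,
          \prod_(k < m | (k.+1 < m)%N)
             ((\prod_(l < m | (k < l)%N) q (h (tau k)) (h (tau l))) - 1) != 0)].
Proof.
split=> [decomp | [q_diag q_skew orderable]].
  have q_diag := nichols_eq_F_plus_Lie_qii decomp.
  have q_skew := nichols_eq_F_plus_Lie_qij decomp.
  split=> //; apply: chainable_chain_orderable.
  exact: nichols_eq_F_plus_Lie_chainable q_diag q_skew q_neq0 decomp.
apply: chainable_nichols_eq_F_plus_Lie q_diag q_skew q_neq0 _.
exact: chain_orderable_chainable orderable.
Qed.
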